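(* For every integer $n\ge 3$, $\Delta_n>0$; that is, Bob is strictly more likely than Alice to win the game with $n$ flips. Equivalently, the coefficient of $t^n$ in $f(t)=\frac12\big((1-t)(1-2t)(2t^2+t+1)\big)^{-1/2}-\frac12(1-t)^{-1}$ is strictly positive for all $n\ge3$.
   Context: A fair coin is flipped $n$ times, producing a sequence $x_1,\dots,x_n\in\{H,T\}$ of independent uniformly random outcomes. Alice's score is the number of indices $i\in\{1,\dots,n-1\}$ with $(x_i,x_{i+1})=(H,H)$; Bob's score is the number of indices $i\in\{1,\dots,n-1\}$ with $(x_i,x_{i+1})=(H,T)$. Let $P_n(\mathrm{Bob})$ be the probability that Bob's score is strictly larger than Alice's, $P_n(\mathrm{Alice})$ the probability that Alice's score is strictly larger than Bob's, and $\Delta_n=P_n(\mathrm{Bob})-P_n(\mathrm{Alice})$. The square root is the branch equal to $1$ at $t=0$. *)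

From mathcomp Require Import all_boot all_order all_algebra.
Set Implicit Arguments. Unset Strict Implicit. Unset Printing Implicit Defensive.
Import Order.TTheory GRing.Theory Num.Theory.

(* A sequence of n coin flips: x i = true means H, false means T. *)
Definition flips (n : nat) := {ffun 'I_n -> bool}.

(* value of x at a natural index k (default false if k >= n; only used for k < n) *)
Definition at_idx (n : nat) (x : {ffun 'I_n -> bool}) (k : nat) : bool :=
  match insub k with Some j => x j | None => false end.

Definition pair_count (n : nat) (a b : bool) (x : {ffun 'I_n -> bool}) : nat :=
  #|[set i : 'I_n | (i.+1 < n) && (x i == a) && (at_idx x i.+1 == b)]|.

Definition alice_score n (x : {ffun 'I_n -> bool}) := pair_count true true x.
Definition bob_score n (x : {ffun 'I_n -> bool}) := pair_count true false x.

Definition P_bob (n : nat) : rat :=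
  #|[set x : {ffun 'I_n -> bool} | alice_score x < bob_score x]|%:R / (2 ^ n)%:R.
Definition P_alice (n : nat) : rat :=
  #|[set x : {ffun 'I_n -> bool} | bob_score x < alice_score x]|%:R / (2 ^ n)%:R.

Local Open Scope ring_scope.
Definition Delta (n : nat) : rat := P_bob n - P_alice n.

From mathcomp Require Import all_boot all_order all_algebra.
From mathcomp Require Import zify.
Set Implicit Arguments. Unset Strict Implicit. Unset Printing Implicit Defensive.
Import GRing.Theory Num.Theory.

(* Read flips newest first, so that a new flip is consed onto the history.
   Bob's margin (his score minus Alice's) equals 2 (#runs of H) - #H - [last flip is H];
   a new flip changes it only when the previous flip was H (by -1 for H, +1 for T).
   Writing b_n(d) for the number of histories ending in H with margin d and a_n for the
   number of ties ending in T, this gives D_{n+1} = 2 D_n + b_n(-1) - b_n(1) for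
   D_n = #{Bob wins} - #{Alice wins}, and a_{n+1} = a_n + b_n(-1).  Counting histories
   by heads, runs and last flip yields products of binomials, and the symmetry
   C(2j+1, j) = C(2j+1, j+1) shows a_n = b_n(1) + 1.  Hence D_n = a_n - 1, and
   a_n >= 2 (TTT and HHT) once n >= 3. *)

Lemma count_partition (T : eqType) (l : seq T) (P : pred T) (f : T -> nat) m :
  {in l, forall x, f x < m} ->
  count P l = \sum_(0 <= k < m) count (fun x => P x && (f x == k)) l.
Proof.
elim: l => [|x l IHl] lt_fm /=; first by rewrite big1.
rewrite big_split /= -IHl => [|y ly]; last by rewrite lt_fm // inE ly orbT.
congr (_ + _); rewrite (eq_bigr (fun k => if k == f x then P x : nat else 0)).
  by rewrite -big_mkcond big_nat1_eq lt_fm ?mem_head.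
by move=> k _; rewrite eq_sym; case: (k == f x); rewrite ?andbT ?andbF.
Qed.

Lemma cards_count (T : finType) (P : pred T) : #|[set x | P x]| = count P (enum T).
Proof. by rewrite -sum1_card -sum1_count big_enum_cond; apply: eq_bigl => x; rewrite inE. Qed.

Lemma cons_inj (T : Type) (x : T) : injective (cons x).
Proof. by move=> s t [->]. Qed.

Fixpoint bitseqs n : seq bitseq :=
  if n is m.+1 then [seq true :: s | s <- bitseqs m] ++ [seq false :: s | s <- bitseqs m]
  else [:: [::]].

Lemma mem_bitseqs n s : (s \in bitseqs n) = (size s == n).
Proof.
elim: n s => [|n IHn] [|b s] //=; rewrite mem_cat.
  by apply/negbTE; apply/orP=> -[] /mapP[].
have notin_map b' : b' != b -> (b :: s \in [seq b' :: t | t <- bitseqs n]) = false.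
  by move=> neq; apply/negbTE/mapP => -[t _ [eqb _]]; rewrite eqb eqxx in neq.
by move: notin_map; case: b => notin_map;
  rewrite (mem_map (@cons_inj _ _)) IHn eqSS notin_map ?orbF.
Qed.

Lemma bitseqs_uniq n : uniq (bitseqs n).
Proof.
elim: n => [|n IHn] //=; rewrite cat_uniq !(map_inj_uniq (@cons_inj _ _)) IHn /= andbT.
by apply/hasPn => _ /mapP[s _ ->]; apply/mapP => -[].
Qed.

Lemma perm_bitseqs n (l : seq bitseq) :
  uniq l -> (forall s, (s \in l) = (size s == n)) -> perm_eq l (bitseqs n).
Proof.
by move=> l_uniq mem_l; apply: uniq_perm l_uniq (bitseqs_uniq n) _ => s;
  rewrite mem_l mem_bitseqs.
Qed.

Lemma count_bitseqsS (P : pred bitseq) n :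
  count P (bitseqs n.+1) =
  count (P \o cons true) (bitseqs n) + count (P \o cons false) (bitseqs n).
Proof. by rewrite count_cat !count_map. Qed.

(* Histories are stored newest flip first. *)
Definition heads (s : bitseq) := count id s.

Fixpoint hruns (s : bitseq) : nat :=
  if s is b :: s' then hruns s' + (b && ~~ head false s') else 0.

Definition lastH (s : bitseq) := head false s.

Lemma lastH_le_hruns s : lastH s <= hruns s.
Proof.
elim: s => [|b s IHs] //=; move: IHs; rewrite /lastH.
by case: b; case: (head false s) => /=; lia.
Qed.

Lemma hruns_le_heads s : hruns s <= heads s.
Proof. by elim: s => [|[] s IHs] //=; move: IHs; rewrite /heads /=; lia. Qed.

(* #HT = hruns - lastH and #HH = heads - hruns, see npairs_rev. *)
Definition margin (s : bitseq) : int :=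
  ((hruns s * 2)%:Z - (heads s)%:Z - (lastH s)%:Z)%R.

Lemma margin_cons b s :
  margin (b :: s) = (margin s + (if b then - (lastH s)%:Z else (lastH s)%:Z))%R.
Proof. rewrite /margin /lastH /heads; case: b; case: s => [|[] s] /=; lia. Qed.

Definition bob_leads s := (0 < margin s)%R.
Definition alice_leads s := (margin s < 0)%R.
Definition tie_lastT s := ~~ lastH s && (margin s == 0%R).
Definition trail1_lastH s := lastH s && (margin s == -1)%R.
Definition lead1_lastH s := lastH s && (margin s == 1%R).

Lemma leads_cons s :
  bob_leads (true :: s) + bob_leads (false :: s) + 2 * alice_leads s + lead1_lastH s
  = 2 * bob_leads s + alice_leads (true :: s) + alice_leads (false :: s) + trail1_lastH s.
Proof.
rewrite /bob_leads /alice_leads /lead1_lastH /trail1_lastH !margin_cons.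
case: (lastH s) => /=; lia.
Qed.

Lemma count_leads_rec n :
  count bob_leads (bitseqs n.+1) + 2 * count alice_leads (bitseqs n)
    + count lead1_lastH (bitseqs n)
  = 2 * count bob_leads (bitseqs n) + count alice_leads (bitseqs n.+1)
    + count trail1_lastH (bitseqs n).
Proof.
rewrite !count_bitseqsS; elim: (bitseqs n) => //= s l.
by have := leads_cons s; lia.
Qed.

Lemma tie_lastT_cons s :
  tie_lastT (true :: s) + tie_lastT (false :: s) = tie_lastT s + trail1_lastH s.
Proof.
rewrite /tie_lastT /trail1_lastH !margin_cons /=.
by case: (lastH s) => /=; lia.
Qed.

Lemma count_tie_lastT_rec n :
  count tie_lastT (bitseqs n.+1)
  = count tie_lastT (bitseqs n) + count trail1_lastH (bitseqs n).
Proof.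
rewrite count_bitseqsS; elim: (bitseqs n) => //= s l.
by move: (tie_lastT_cons s) => /=; lia.
Qed.

Definition nprofile n h k e :=
  count (fun s => (heads s == h) && (hruns s == k) && (lastH s == e)) (bitseqs n).

Lemma hruns_eq0 s : (hruns s == 0) = (heads s == 0).
Proof.
elim: s => [|[] s IHs] //; last by rewrite /heads /= in IHs *; rewrite addn0.
by have := lastH_le_hruns (true :: s); rewrite /heads /=; lia.
Qed.

Lemma nprofile_gt_size n h k e : n < h -> nprofile n h k e = 0.
Proof.
move=> lt_nh; apply/eqP; rewrite eqn0Ngt -has_count; apply/hasPn => s.
rewrite mem_bitseqs => /eqP size_s; have := count_size id s.
by rewrite /heads in lt_nh *; lia.
Qed.

Lemma nprofileS_lastT n h k :
  nprofile n.+1 h k false = nprofile n h k false + nprofile n h k true.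
Proof.
rewrite /nprofile count_bitseqsS; elim: (bitseqs n) => //= s l.
by rewrite /lastH /=; case: (head false s) => /=; lia.
Qed.

Lemma nprofileS_lastH n h k :
  nprofile n.+1 h.+1 k.+1 true = nprofile n h k.+1 true + nprofile n h k false.
Proof.
rewrite /nprofile count_bitseqsS; elim: (bitseqs n) => //= s l.
by rewrite /lastH /=; case: (head false s) => /=; lia.
Qed.

Lemma nprofile_hruns0 n h e : nprofile n h.+1 0 e = 0.
Proof.
apply/eqP; rewrite eqn0Ngt -has_count; apply/hasPn => s _.
by apply/negP => /andP[/andP[/eqP heads_s]]; rewrite hruns_eq0 heads_s.
Qed.

Lemma nprofile_heads0 n k e : nprofile n 0 k e = (k == 0) && ~~ e.
Proof.
have no_lastH m j : nprofile m 0 j true = 0.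
  apply/eqP; rewrite eqn0Ngt -has_count; apply/hasPn => s _; apply/negP.
  move=> /andP[/andP[/eqP heads_s _] /eqP lastH_s].
  by have := leq_trans (lastH_le_hruns s) (hruns_le_heads s); rewrite heads_s lastH_s.
case: e; first by rewrite no_lastH andbF.
elim: n => [|n IHn]; first by rewrite /nprofile /=; case: k.
by rewrite nprofileS_lastT IHn no_lastH addn0.
Qed.

Lemma nprofile_binomial n h t k : h.+1 + t = n ->
  nprofile n h.+1 k.+1 true = 'C(h, k) * 'C(t, k) /\
  nprofile n h.+1 k.+1 false = 'C(h, k) * 'C(t, k.+1).
Proof.
elim: n h t k => [|n IHn] h t k; rewrite addSn // => -[def_n].
split.
- rewrite nprofileS_lastH; case: h def_n => [|h] def_n.
    by rewrite !nprofile_heads0 bin0n; case: k => //=; rewrite bin0.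
  have [-> _] := IHn h t k def_n.
  case: k => [|k]; first by rewrite nprofile_hruns0 !bin0.
  by have [_ ->] := IHn h t k def_n; rewrite binS mulnDl addnC.
- rewrite nprofileS_lastT; case: t def_n => [|t] def_n.
    by rewrite !nprofile_gt_size ?bin0n ?muln0 // -def_n addn0.
  have [-> ->] := IHn h t k (etrans (addSnnS _ _) def_n).
  by rewrite binS mulnDr addnC.
Qed.

Lemma nprofile_tie_lastT_lead1_lastH n j :
  nprofile n j.+1.*2 j.+1 false = nprofile n j.+1.*2 j.+2 true.
Proof.
have [lt_n|le_n] := ltnP n j.+1.*2; first by rewrite !nprofile_gt_size.
rewrite doubleS in le_n *; have def_n : (j.*2.+1).+1 + (n - j.*2.+2) = n.
  by rewrite addnC subnK.
have [_ ->] := nprofile_binomial j def_n; have [-> _] := nprofile_binomial j.+1 def_n.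
by rewrite -bin_sub; [congr ('C(_, _) * _); lia | lia].
Qed.

Lemma heads_bitseqs n s : s \in bitseqs n -> heads s <= n.
Proof. by rewrite mem_bitseqs => /eqP <-; apply: count_size. Qed.

Lemma count_tie_lastT n :
  count tie_lastT (bitseqs n) = \sum_(0 <= j < n.+1) nprofile n j.*2 j false.
Proof.
rewrite (@count_partition _ _ _ (fun s => heads s %/ 2) n.+1) => [|s /heads_bitseqs];
  last by lia.
apply: eq_bigr => j _; apply: eq_count => s.
by rewrite /tie_lastT /margin; case: (lastH s) => /=; lia.
Qed.

Lemma count_lead1_lastH n :
  count lead1_lastH (bitseqs n) = \sum_(0 <= j < n.+1) nprofile n j.*2 j.+1 true.
Proof.
rewrite (@count_partition _ _ _ (fun s => heads s %/ 2) n.+1) => [|s /heads_bitseqs];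
  last by lia.
apply: eq_bigr => j _; apply: eq_count => s.
by rewrite /lead1_lastH /margin; case: (lastH s) => /=; lia.
Qed.

(* The extra tie is the all-tails history; see nprofile_tie_lastT_lead1_lastH. *)
Lemma count_tie_lastT_lead1_lastH n :
  count tie_lastT (bitseqs n) = (count lead1_lastH (bitseqs n)).+1.
Proof.
rewrite count_tie_lastT count_lead1_lastH !big_nat_recl // !nprofile_heads0 /= add0n.
by congr _.+1; apply: eq_bigr => j _; apply: nprofile_tie_lastT_lead1_lastH.
Qed.

Lemma count_leads_balance n :
  count bob_leads (bitseqs n) + 1
  = count alice_leads (bitseqs n) + count tie_lastT (bitseqs n).
Proof.
elim: n => [//|n IHn].
have := count_leads_rec n; have := count_tie_lastT_rec n.
by have := count_tie_lastT_lead1_lastH n; lia.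
Qed.

Lemma count_tie_lastT_ge2 n : 3 <= n -> 2 <= count tie_lastT (bitseqs n).
Proof.
elim: n => [//|n IHn]; rewrite leq_eqVlt ltnS => /predU1P[<- //|le3n].
by rewrite count_tie_lastT_rec (leq_trans (IHn le3n)) ?leq_addr.
Qed.

Lemma count_alice_lt_bob n :
  3 <= n -> count alice_leads (bitseqs n) < count bob_leads (bitseqs n).
Proof. by move=> le3n; have := count_leads_balance n; have := count_tie_lastT_ge2 le3n; lia. Qed.

Fixpoint npairs (a b : bool) (s : bitseq) : nat :=
  if s is x :: s' then
    ((if s' is y :: _ then (x == a) && (y == b) else false) : nat) + npairs a b s'
  else 0.

Lemma npairs_nth a b s : npairs a b s =
  \sum_(i < size s) ((i.+1 < size s) && (nth false s i == a) && (nth false s i.+1 == b)).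
Proof.
elim: s => [|x s IHs]; first by rewrite big_ord0.
by rewrite /= big_ord_recl /= IHs; case: s {IHs}.
Qed.

Lemma npairs_rcons2 a b s x y :
  npairs a b (rcons (rcons s x) y) = npairs a b (rcons s x) + ((x == a) && (y == b)).
Proof.
elim: s => [|z s IHs] /=; first by rewrite !addn0.
by rewrite IHs addnA; case: s IHs.
Qed.

Lemma npairs_rev s :
  npairs true true (rev s) + hruns s = heads s /\
  npairs true false (rev s) + lastH s = hruns s.
Proof.
elim: s => [//|x [|y s] IHs]; first by case: x.
rewrite !rev_cons !npairs_rcons2 -!rev_cons; move: IHs; rewrite /heads /lastH /=.
by case: x; case: y => /=; lia.
Qed.

Definition flipseq n (x : flips n) := mkseq (at_idx x) n.

Lemma at_idxE n (x : flips n) (i : 'I_n) : at_idx x i = x i.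
Proof. by rewrite /at_idx valK. Qed.

Lemma pair_count_flipseq a b n (x : flips n) : pair_count a b x = npairs a b (flipseq x).
Proof.
rewrite /pair_count npairs_nth size_mkseq -sum1_card big_mkcond /=.
apply: eq_bigr => i _; rewrite inE nth_mkseq // at_idxE.
by case: ltnP => //= lt_i1n; rewrite nth_mkseq.
Qed.

Lemma flipseq_inj n : injective (@flipseq n).
Proof.
move=> x y /(congr1 (nth false ^~ _)) eq_xy; apply/ffunP => i.
by have := eq_xy i; rewrite !nth_mkseq // !at_idxE.
Qed.

Lemma card_flips n (P : pred bitseq) :
  #|[set x : flips n | P (rev (flipseq x))]| = count P (bitseqs n).
Proof.
rewrite cards_count -(count_map (rev \o @flipseq n)); apply/permP/perm_bitseqs.
  by rewrite map_inj_uniq ?enum_uniq // => x y /(can_inj (@revK _)) /flipseq_inj.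
move=> s; apply/mapP/eqP => [[x _ ->]|size_s]; first by rewrite size_rev size_mkseq.
exists [ffun i : 'I_n => nth false (rev s) i]; first by rewrite mem_enum.
rewrite /comp /flipseq -{1}[s]revK; congr rev; apply: (@eq_from_nth _ false).
  by rewrite size_mkseq size_rev.
by rewrite size_rev size_s => i lt_in; rewrite nth_mkseq // /at_idx insubT /= ffunE.
Qed.

Lemma score_margin n (x : flips n) :
  ((bob_score x)%:Z - (alice_score x)%:Z)%R = margin (rev (flipseq x)).
Proof.
rewrite /bob_score /alice_score !pair_count_flipseq /margin.
by have [] := npairs_rev (rev (flipseq x)); rewrite revK; lia.
Qed.

Lemma card_bob_wins n :
  #|[set x : flips n | alice_score x < bob_score x]| = count bob_leads (bitseqs n).
Proof.
rewrite -card_flips; apply: eq_card => x.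
by rewrite !inE /bob_leads -score_margin subr_gt0 ltz_nat.
Qed.

Lemma card_alice_wins n :
  #|[set x : flips n | bob_score x < alice_score x]| = count alice_leads (bitseqs n).
Proof.
rewrite -card_flips; apply: eq_card => x.
by rewrite !inE /alice_leads -score_margin subr_lt0 ltz_nat.
Qed.

Local Open Scope ring_scope.

Theorem mainTheorem3 (n : nat) : (3 <= n)%N -> 0 < Delta n.
Proof.
move=> le3n; rewrite /Delta /P_bob /P_alice card_bob_wins card_alice_wins -mulrBl.
by rewrite divr_gt0 ?ltr0n ?expn_gt0 // subr_gt0 ltr_nat count_alice_lt_bob.
Qed.
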